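(* Let $n\geq2$. Then there exist matrices $u,v,w\in[M_n(\mathbb{Z}),M_n(\mathbb{Z})]_1$ such that $[u,v]$ is invertible in $M_n(\mathbb{Z})$ and $v=vw$.
   Context: $[x,y]=xy-yx$, and $[M_n(\mathbb{Z}),M_n(\mathbb{Z})]_1=\{[x,y]:x,y\in M_n(\mathbb{Z})\}$ is the set of commutators in the ring of $n\times n$ integer matrices. *)

From mathcomp Require Import all_boot all_order all_algebra.
Set Implicit Arguments. Unset Strict Implicit. Unset Printing Implicit Defensive.
Import GRing.Theory.
Local Open Scope ring_scope.

Definition mx_comm (n : nat) (x y : 'M[int]_n) : 'M[int]_n := x *m y - y *m x.

(* Membership in [M_n(Z), M_n(Z)]_1 : x is a single commutator. *)
Definition is_commutator (n : nat) (z : 'M[int]_n) : Prop :=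
  exists x y : 'M[int]_n, z = mx_comm x y.

(* Explicit witnesses exist in sizes 2 and 3.  The commutator of two
   block-diagonal matrices is computed blockwise and the determinant of a
   block-diagonal matrix is the product of the blocks' determinants, so
   witnesses for sizes a and b assemble block-diagonally into witnesses for
   size a + b; every n >= 2 is a sum of 2's and at most one 3. *)

From mathcomp Require Import all_boot all_order all_algebra.
Local Open Scope ring_scope.
Import GRing.Theory.

Lemma nat_ind_step2_from2 (P : nat -> Prop) :
  P 2%N -> P 3%N -> (forall n, P n -> P (2 + n)%N) -> forall n, (2 <= n)%N -> P n.
Proof.
move=> P2 P3 PS n; elim/ltn_ind: n => [[|[|[|[|n]]]]] // IH _.
by apply: PS; apply: IH.
Qed.

Definition unit_comm_triple (n : nat) : Prop :=
  exists u v w : 'M[int]_n,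
    [/\ is_commutator u, is_commutator v, is_commutator w,
        (mx_comm u v \in unitmx) & v = v *m w].

Lemma mx_comm_block_diag a b (x1 y1 : 'M[int]_a) (x2 y2 : 'M[int]_b) :
  mx_comm (block_mx x1 0 0 x2) (block_mx y1 0 0 y2) =
  block_mx (mx_comm x1 y1) 0 0 (mx_comm x2 y2).
Proof.
rewrite /mx_comm !mulmx_block !mul0mx !mulmx0 !addr0 !add0r.
by rewrite opp_block_mx add_block_mx !oppr0 !addr0.
Qed.

Lemma is_commutator_block_diag a b (z1 : 'M[int]_a) (z2 : 'M[int]_b) :
  is_commutator z1 -> is_commutator z2 -> is_commutator (block_mx z1 0 0 z2).
Proof.
move=> [x1 [y1 ->]] [x2 [y2 ->]].
by exists (block_mx x1 0 0 x2), (block_mx y1 0 0 y2); rewrite mx_comm_block_diag.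
Qed.

Lemma unit_comm_tripleD a b :
  unit_comm_triple a -> unit_comm_triple b -> unit_comm_triple (a + b).
Proof.
move=> [u1 [v1 [w1 [cu1 cv1 cw1 unit1 fix1]]]].
move=> [u2 [v2 [w2 [cu2 cv2 cw2 unit2 fix2]]]].
exists (block_mx u1 0 0 u2), (block_mx v1 0 0 v2), (block_mx w1 0 0 w2).
split; try exact: is_commutator_block_diag.
- by rewrite mx_comm_block_diag unitmxE det_ublock unitrM -!unitmxE unit1 unit2.
- by rewrite mulmx_block !mul0mx !mulmx0 !addr0 !add0r -fix1 -fix2.
Qed.

Definition mx_of_rows (k : nat) (rows : seq (seq int)) : 'M[int]_k :=
  \matrix_(i < k, j < k) nth 0 (nth [::] rows i) j.

Ltac mx_compute :=
  apply/matrixP => [[[|[|[|?]]] ?] [[|[|[|?]]] ?]] //;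
  rewrite /mx_comm ?mxE ?big_ord_recr ?big_ord0 /= ?mxE //.

Lemma unit_comm_triple2 : unit_comm_triple 2.
Proof.
pose e12 := mx_of_rows 2 [:: [:: 0; 1]; [:: 0; 0]].
pose e21 := mx_of_rows 2 [:: [:: 0; 0]; [:: 1; 0]].
pose d := mx_of_rows 2 [:: [:: -1; 0]; [:: 0; 1]].
have comm_e21_e12 : mx_comm e21 e12 = d by mx_compute.
exists e21, e12, d; split.
- by exists (mx_of_rows 2 [:: [:: 0; 0]; [:: 0; 1]]), e21; mx_compute.
- by exists (mx_of_rows 2 [:: [:: 1; 0]; [:: 0; 0]]), e12; mx_compute.
- by exists e21, e12.
- rewrite comm_e21_e12; apply: (proj1 (@mulmx1_unit _ _ _ d _)); mx_compute.
- mx_compute.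
Qed.

Lemma unit_comm_triple3 : unit_comm_triple 3.
Proof.
pose u := mx_of_rows 3 [:: [:: 0; 1; 1]; [:: -1; 0; 0]; [:: -1; 0; 0]].
pose v := mx_of_rows 3 [:: [:: 0; 1; 0]; [:: 0; 0; 1]; [:: 0; 0; 0]].
pose w := mx_of_rows 3 [:: [:: -2; 0; 0]; [:: 0; 1; 0]; [:: 0; 0; 1]].
have comm_u_v : mx_comm u v =
    mx_of_rows 3 [:: [:: 1; 0; 1]; [:: 1; -1; 0]; [:: 0; -1; 0]] by mx_compute.
exists u, v, w; split.
- exists (mx_of_rows 3 [:: [:: -1; -1; -1]; [:: -1; -1; -1]; [:: -1; -1; -1]]).
  by exists (mx_of_rows 3 [:: [:: 1; 0; 0]; [:: 0; 0; 0]; [:: 0; 0; 0]]); mx_compute.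
- by exists (mx_of_rows 3 [:: [:: 0; 0; 0]; [:: 0; -1; 0]; [:: 0; 0; -2]]), v;
    mx_compute.
- by exists v, (mx_of_rows 3 [:: [:: 0; 0; 0]; [:: -2; 0; 0]; [:: 0; -1; 0]]);
    mx_compute.
- rewrite comm_u_v; apply: (proj1 (@mulmx1_unit _ _ _
    (mx_of_rows 3 [:: [:: 0; 1; -1]; [:: 0; 0; -1]; [:: 1; -1; 1]]) _)).
  mx_compute.
- mx_compute.
Qed.

Theorem lemma5p14 (n : nat) (hn : (2 <= n)%N) :
  exists u v w : 'M[int]_n,
    [/\ is_commutator u, is_commutator v, is_commutator w,
        (mx_comm u v \in unitmx) & v = v *m w].
Proof.
have step m : unit_comm_triple m -> unit_comm_triple (2 + m).
  exact: unit_comm_tripleD unit_comm_triple2.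
exact: (@nat_ind_step2_from2 unit_comm_triple
  unit_comm_triple2 unit_comm_triple3 step _ hn).
Qed.
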